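(* There exist two MatP instances $I_A,I_B$ with the same underlying graph, differing only by a single swap in the preference order of one agent, such that a robust popular matching with respect to $I_A$ and $I_B$ exists but no robust dominant matching exists; in particular, a maximum-size robust popular matching need not be robust dominant. Concretely: $W=\{w_1,w_2,w_3\}$, $F=\{f_1,f_2,f_3\}$; in $I_A$: $w_1: f_1\succ f_3$, $w_2: f_1\succ f_2$, $w_3: f_3$; in $I_B$ the same except $w_1: f_3\succ f_1$; in both: $f_1: w_2\succ w_1$, $f_2: w_2$, $f_3: w_1\succ w_3$ (edges are exactly the pairs appearing in these lists). Then $\{\{w_1,f_3\},\{w_2,f_1\}\}$ is the unique robust popular matching and there is no robust dominant matching.
   Context: An instance $I$ of matchings under preferences (MatP) consists of a bipartite graph $G^I=(W\cup F,E^I)$ with disjoint finite vertex sets $W$ (workers) and $F$ (firms), whose elements are called agents, together with, for each agent $x$, a strict linear order $\succ_x^I$ over the set $N_x^I$ of neighbors of $x$ in $G^I$. A matching is a set of pairwise disjoint edges; $M(x)$ denotes the partner of a matched agent $x$. Agent $x$ prefers $M$ over $M'$ if $x$ is matched in $M$ and unmatched in $M'$, or matched in both with $M(x)\succ_x M'(x)$. Define $\mathrm{vote}^I_x(M,M')=1$ if $x$ prefers $M$ over $M'$, $-1$ if $x$ prefers $M'$ over $M$, and $0$ otherwise, and $\phi^I(M,M')=\sum_{x\in W\cup F}\mathrm{vote}^I_x(M,M')$. A matching $M$ of $G^I$ is popular for $I$ if $\phi^I(M,M')\ge 0$ for every matching $M'$ of $G^I$; it is dominant for $I$ if it is popular and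 $\phi^I(M,M')>0$ for every matching $M'$ of $G^I$ with $|M'|>|M|$. A matching is robust popular (resp. robust dominant) with respect to $I_A,I_B$ if it is popular (resp. dominant) for both. *)

From mathcomp Require Import all_boot all_order all_algebra.
Set Implicit Arguments. Unset Strict Implicit. Unset Printing Implicit Defensive.
Import Order.TTheory GRing.Theory Num.Theory.

(* A MatP instance: bipartite graph on W ∪ F given by its edge set, and for
   each agent a strict linear order on its neighbours, encoded as the list of
   its neighbours from most to least preferred. *)
Record instance (W F : finType) := Instance {
  edges : {set W * F};
  prefW : W -> seq F;
  prefF : F -> seq W }.

Definition wf_instance (W F : finType) (I : instance W F) : Prop :=
  (forall w, uniq (prefW I w) /\ forall f, (f \in prefW I w) = ((w, f) \in edges I)) /\
  (forall f, uniq (prefF I f) /\ forall w, (w \in prefF I f) = ((w, f) \in edges I)).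

Definition is_matching (W F : finType) (E : {set W * F}) (M : {set W * F}) : Prop :=
  M \subset E /\
  (forall e1 e2, e1 \in M -> e2 \in M -> e1 != e2 -> e1.1 != e2.1 /\ e1.2 != e2.2).

Definition partnerW (W F : finType) (M : {set W * F}) (w : W) : option F :=
  [pick f | (w, f) \in M].
Definition partnerF (W F : finType) (M : {set W * F}) (f : F) : option W :=
  [pick w | (w, f) \in M].

Definition prefers (T : eqType) (s : seq T) (a b : option T) : bool :=
  match a, b with
  | Some x, None => true
  | Some x, Some y => index x s < index y s
  | _, _ => false
  end.

Definition vote (T : eqType) (s : seq T) (a b : option T) : int :=
  (prefers s a b)%:Z - (prefers s b a)%:Z.

Definition phi (W F : finType) (I : instance W F) (M M' : {set W * F}) : int :=
  (\sum_(w : W) vote (prefW I w) (partnerW M w) (partnerW M' w) +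
   \sum_(f : F) vote (prefF I f) (partnerF M f) (partnerF M' f))%R.

Definition popular (W F : finType) (I : instance W F) (M : {set W * F}) : Prop :=
  is_matching (edges I) M /\
  forall M', is_matching (edges I) M' -> (0 <= phi I M M')%R.

Definition dominant (W F : finType) (I : instance W F) (M : {set W * F}) : Prop :=
  popular I M /\
  forall M', is_matching (edges I) M' -> #|M| < #|M'| -> (0 < phi I M M')%R.

Definition robust_popular (W F : finType) (IA IB : instance W F) M : Prop :=
  popular IA M /\ popular IB M.
Definition robust_dominant (W F : finType) (IA IB : instance W F) M : Prop :=
  dominant IA M /\ dominant IB M.

(* The concrete example: W = F = 'I_3, with w1,w2,w3 = 0,1,2 and f1,f2,f3 = 0,1,2. *)
Definition a1 : 'I_3 := @Ordinal 3 0 isT.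
Definition a2 : 'I_3 := @Ordinal 3 1 isT.
Definition a3 : 'I_3 := @Ordinal 3 2 isT.

Definition E_ex : {set 'I_3 * 'I_3} :=
  [set (a1, a1); (a1, a3); (a2, a1); (a2, a2); (a3, a3)].

Definition prefF_ex (f : 'I_3) : seq 'I_3 :=
  match val f with
  | 0 => [:: a2; a1]
  | 1 => [:: a2]
  | _ => [:: a1; a3]
  end.

Definition prefW_A (w : 'I_3) : seq 'I_3 :=
  match val w with
  | 0 => [:: a1; a3]
  | 1 => [:: a1; a2]
  | _ => [:: a3]
  end.

Definition prefW_B (w : 'I_3) : seq 'I_3 :=
  match val w with
  | 0 => [:: a3; a1]
  | 1 => [:: a1; a2]
  | _ => [:: a3]
  end.

Definition I_A : instance 'I_3 'I_3 := Instance E_ex prefW_A prefF_ex.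
Definition I_B : instance 'I_3 'I_3 := Instance E_ex prefW_B prefF_ex.

Definition M_ex : {set 'I_3 * 'I_3} := [set (a1, a3); (a2, a1)].

(* Both instances have five edges, so popularity is decided by brute force:
   every matching lies in the edge set, hence is the mask of a fixed
   enumeration of the edges, and it suffices to compare with the 2^5 masks.
   This shows that {w1 f3, w2 f1} is the only matching popular in both
   instances.  It is not dominant in I_A: the larger perfect matching
   {w1 f1, w2 f2, w3 f3} ties with it, being preferred by w2, w3, f2 and
   rejected by w1, f1, f3. *)
From mathcomp Require Import all_boot all_order all_algebra.
Set Implicit Arguments. Unset Strict Implicit. Unset Printing Implicit Defensive.

Lemma sum_foldr_enum (V : nmodType) (T : finType) (ts : seq T) (G : T -> V) :
  uniq ts -> (forall t, t \in ts) ->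
  (\sum_(t : T) G t = foldr (fun t acc => G t + acc) 0 ts)%R.
Proof.
move=> uniq_ts ts_full.
have -> : (\sum_(t : T) G t = \sum_(t <- ts) G t)%R.
  by rewrite (big_uniq _ uniq_ts); apply: eq_bigl => t; rewrite ts_full.
by elim: ts {uniq_ts ts_full} => [|t ts IH]; rewrite ?big_nil ?big_cons ?IH.
Qed.

Fixpoint bitseqs n : seq bitseq :=
  if n is n'.+1 then [seq b :: m | b <- [:: true; false], m <- bitseqs n']
  else [:: [::]].

Lemma mem_bitseqs n (m : bitseq) : size m = n -> m \in bitseqs n.
Proof.
elim: n m => [|n IH] [|b m] // [/IH m_n]; apply/allpairsP.
by exists (b, m); case: b.
Qed.

Section MatchingsAsSequences.
Variables (W F : finType) (E : {set W * F}) (es : seq (W * F)).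
Hypothesis es_E : es =i E.

Definition matching_seq (s : seq (W * F)) : bool :=
  all (mem es) s &&
  all (fun e1 => all (fun e2 => (e1 != e2) ==> (e1.1 != e2.1) && (e1.2 != e2.2)) s) s.

Lemma matching_seqP s : reflect (is_matching E [set e in s]) (matching_seq s).
Proof.
apply: (iffP andP) => [[/allP s_es /allP s_disj] | [/subsetP s_E s_disj]]; split.
- by apply/subsetP => e; rewrite inE -(es_E e); apply: s_es.
- move=> e1 e2; rewrite !inE => /s_disj/allP e1_disj /e1_disj/implyP disj /disj.
  by move/andP.
- by apply/allP => e e_s; rewrite /= (es_E e); apply: s_E; rewrite inE.
apply/allP => e1 e1_s; apply/allP => e2 e2_s; apply/implyP => e12.
by apply/andP; apply: s_disj; rewrite ?inE.
Qed.

Lemma subset_mask (M : {set W * F}) :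
  M \subset E -> M = [set e in mask [seq e \in M | e <- es] es].
Proof.
move=> /subsetP M_E; apply/setP => e; rewrite inE -filter_mask mem_filter.
by case e_M: (e \in M); rewrite //= (es_E e) M_E.
Qed.

End MatchingsAsSequences.

Section MatchingPartners.
Variables (W F : finType) (E M : {set W * F}).
Hypothesis matching_M : is_matching E M.

Lemma matching_worker_inj w f f' : (w, f) \in M -> (w, f') \in M -> f = f'.
Proof.
move=> wf_M wf'_M; apply/eqP; apply: contraT => ff'.
have [|/eqP //] := matching_M.2 _ _ wf_M wf'_M.
by rewrite xpair_eqE negb_and ff' orbT.
Qed.

Lemma matching_firm_inj w w' f : (w, f) \in M -> (w', f) \in M -> w = w'.
Proof.
move=> wf_M w'f_M; apply/eqP; apply: contraT => ww'.
have [|_ /eqP //] := matching_M.2 _ _ wf_M w'f_M.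
by rewrite xpair_eqE negb_and ww'.
Qed.

End MatchingPartners.

Section MatesInSequences.
Variables (W F : finType) (E : {set W * F}) (s : seq (W * F)).
Hypothesis matching_s : is_matching E [set e in s].

(* [partnerW] picks in the enumeration order of the type; it agrees with these
   first-edge mates only because [s] is a matching. *)
Definition worker_mate (w : W) : option F := ohead [seq e.2 | e <- s & e.1 == w].
Definition firm_mate (f : F) : option W := ohead [seq e.1 | e <- s & e.2 == f].

Lemma partnerW_seq w : partnerW [set e in s] w = worker_mate w.
Proof.
rewrite /partnerW /worker_mate; case s_w: [seq e <- s | e.1 == w] => [|[w' f] s'] /=.
  case: pickP => // f; rewrite inE => wf_s.
  by have := mem_filter (fun e => e.1 == w) (w, f) s; rewrite s_w eqxx wf_s.
have: (w', f) \in [seq e <- s | e.1 == w] by rewrite s_w mem_head.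
rewrite mem_filter /= => /andP[/eqP-> wf_s].
case: pickP => [f' wf'_s | /(_ f)]; last by rewrite inE wf_s.
by congr Some; apply: (matching_worker_inj matching_s wf'_s); rewrite inE.
Qed.

Lemma partnerF_seq f : partnerF [set e in s] f = firm_mate f.
Proof.
rewrite /partnerF /firm_mate; case s_f: [seq e <- s | e.2 == f] => [|[w f'] s'] /=.
  case: pickP => // w; rewrite inE => wf_s.
  by have := mem_filter (fun e => e.2 == f) (w, f) s; rewrite s_f eqxx wf_s.
have: (w, f') \in [seq e <- s | e.2 == f] by rewrite s_f mem_head.
rewrite mem_filter /= => /andP[/eqP-> wf_s].
case: pickP => [w' w'f_s | /(_ w)]; last by rewrite inE wf_s.
by congr Some; apply: (matching_firm_inj matching_s w'f_s); rewrite inE.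
Qed.

End MatesInSequences.

Section PopularityBySequences.
Variables (W F : finType) (I : instance W F).
Variables (es : seq (W * F)) (ws : seq W) (fs : seq F).
Hypotheses (es_E : es =i edges I) (uniq_ws : uniq ws) (uniq_fs : uniq fs).
Hypotheses (ws_full : forall w, w \in ws) (fs_full : forall f, f \in fs).

Definition phi_seq (s s' : seq (W * F)) : int :=
  (foldr (fun w acc => vote (prefW I w) (worker_mate s w) (worker_mate s' w) + acc) 0 ws +
   foldr (fun f acc => vote (prefF I f) (firm_mate s f) (firm_mate s' f) + acc) 0 fs)%R.

Lemma phi_seqE s s' :
  is_matching (edges I) [set e in s] -> is_matching (edges I) [set e in s'] ->
  phi I [set e in s] [set e in s'] = phi_seq s s'.
Proof.
move=> matching_s matching_s'; rewrite /phi /phi_seq; congr (_ + _)%R.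
  under eq_bigr => w _ do rewrite (partnerW_seq matching_s) (partnerW_seq matching_s').
  exact: sum_foldr_enum.
under eq_bigr => f _ do rewrite (partnerF_seq matching_s) (partnerF_seq matching_s').
exact: sum_foldr_enum.
Qed.

Definition popular_seq (s : seq (W * F)) : bool :=
  matching_seq es s &&
  all (fun m => matching_seq es (mask m es) ==> (0 <= phi_seq s (mask m es))%R)
      (bitseqs (size es)).

Lemma popular_seqP s : reflect (popular I [set e in s]) (popular_seq s).
Proof.
apply: (iffP andP) => [[/(matching_seqP es_E) matching_s /allP phi_ge0] | [matching_s phi_ge0]].
  split=> // M' matching_M'.
  set m := [seq e \in M' | e <- es].
  have M'E : M' = [set e in mask m es] := subset_mask es_E matching_M'.1.
  move: matching_M'; rewrite M'E => matching_M'; rewrite phi_seqE //.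
  apply: (implyP (phi_ge0 m (mem_bitseqs (size_map _ _)))).
  exact/(matching_seqP es_E).
split; first exact/(matching_seqP es_E).
apply/allP => m _; apply/implyP => /(matching_seqP es_E) matching_m.
by rewrite -phi_seqE //; apply: phi_ge0.
Qed.

End PopularityBySequences.

Definition example_edges : seq ('I_3 * 'I_3) :=
  [:: (a1, a1); (a1, a3); (a2, a1); (a2, a2); (a3, a3)].
Definition agents : seq 'I_3 := [:: a1; a2; a3].
Definition M_ex_seq : seq ('I_3 * 'I_3) := [:: (a1, a3); (a2, a1)].
Definition perfect_ex_seq : seq ('I_3 * 'I_3) := [:: (a1, a1); (a2, a2); (a3, a3)].

Lemma example_edgesE : example_edges =i E_ex.
Proof. by move=> e; rewrite !inE !orbA. Qed.

Lemma uniq_agents : uniq agents.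
Proof. by []. Qed.

Lemma mem_agents i : i \in agents.
Proof. by move: i => [[|[|[|n]]] lt_i3]. Qed.

Lemma M_exE : M_ex = [set e in M_ex_seq].
Proof. by apply/setP => e; rewrite !inE. Qed.

Lemma wf_examples : wf_instance I_A /\ wf_instance I_B.
Proof.
by do 2 split; move=> [[|[|[|n]]] lt_n3] //; split=> //= -[[|[|[|m]]] lt_m3];
  rewrite -?example_edgesE.
Qed.

Definition popular_example (I : instance 'I_3 'I_3) : seq ('I_3 * 'I_3) -> bool :=
  popular_seq I example_edges agents agents.

Lemma popular_exampleP I s :
  edges I = E_ex -> reflect (popular I [set e in s]) (popular_example I s).
Proof.
move=> IE; apply: popular_seqP; rewrite ?IE;
  by [apply: example_edgesE | apply: uniq_agents | apply: mem_agents].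
Qed.

Lemma robust_popular_masks :
  all (fun m => let s := mask m example_edges in
        popular_example I_A s && popular_example I_B s ==> (s == M_ex_seq))
      (bitseqs 5).
Proof. by vm_compute. Qed.

Lemma robust_popular_M_ex : popular_example I_A M_ex_seq && popular_example I_B M_ex_seq.
Proof. by vm_compute. Qed.

Lemma phi_M_ex_perfect : phi_seq I_A agents agents M_ex_seq perfect_ex_seq = 0%R.
Proof. by vm_compute. Qed.

Lemma robust_popular_exE M : robust_popular I_A I_B M <-> M = M_ex.
Proof.
split=> [[popular_A popular_B] | ->]; last first.
  have /andP[popular_A popular_B] := robust_popular_M_ex.
  rewrite M_exE; split.
    exact/(@popular_exampleP I_A _ erefl).
  exact/(@popular_exampleP I_B _ erefl).
have ME := subset_mask example_edgesE popular_A.1.1.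
rewrite ME in popular_A popular_B.
have /implyP := allP robust_popular_masks _
  (mem_bitseqs (size_map (fun e => e \in M) example_edges)).
rewrite (introT (@popular_exampleP I_A _ erefl) popular_A).
rewrite (introT (@popular_exampleP I_B _ erefl) popular_B).
by move=> /(_ isT) /eqP M_ex_mask; rewrite ME M_ex_mask M_exE.
Qed.

Lemma M_ex_not_dominant : ~ dominant I_A M_ex.
Proof.
have matching_perfect : is_matching E_ex [set e in perfect_ex_seq].
  exact/(matching_seqP example_edgesE).
have matching_M_ex : is_matching E_ex [set e in M_ex_seq].
  exact/(matching_seqP example_edgesE).
have M_ex_smaller : #|M_ex| < #|[set e in perfect_ex_seq]|.
  have card_set_seq (s : seq ('I_3 * 'I_3)) : uniq s -> #|[set e in s]| = size s.
    by rewrite cardsE => /card_uniqP.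
  by rewrite M_exE !card_set_seq.
move=> [_ /(_ _ matching_perfect M_ex_smaller)].
by rewrite M_exE (phi_seqE (I := I_A) uniq_agents uniq_agents mem_agents mem_agents
  matching_M_ex matching_perfect) phi_M_ex_perfect.
Qed.

Theorem mainTheorem14 :
  [/\ wf_instance I_A, wf_instance I_B,
      (* same graph, same firm preferences, workers' preferences differ only
         by a single swap in w1's list *)
      edges I_A = edges I_B /\ prefF I_A = prefF I_B /\
      (forall w, w != a1 -> prefW I_A w = prefW I_B w) /\
      (exists x y, prefW I_A a1 = [:: x; y] /\ prefW I_B a1 = [:: y; x]),
      (* M_ex is the unique robust popular matching *)
      (forall M, robust_popular I_A I_B M <-> M = M_ex)
    & (* there is no robust dominant matching *)
      (forall M, ~ robust_dominant I_A I_B M)].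
Proof.
have [wf_A wf_B] := wf_examples.
split=> //.
- do 2 split=> //; split; last by exists a1, a3.
  by move=> [[|[|[|n]]] lt_n3].
- exact: robust_popular_exE.
move=> M [dominant_A dominant_B].
have /robust_popular_exE M_ex_M : robust_popular I_A I_B M := conj dominant_A.1 dominant_B.1.
by apply: M_ex_not_dominant; rewrite -M_ex_M.
Qed.
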